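(* Let $d\geq1$, $n\geq1$, $u>d$ and $\vec v=(v_0,\dots,v_{d-1})$ with $u>v_0>\dots>v_{d-1}>0$. A $(\vec v,u)$-dimensional representation of $\mathcal{F}_{d,n}$ is $\vartheta^+$-semistable if and only if it is $\vartheta^+$-stable. Moreover, it is $\vartheta^+$-semistable if and only if the maps $e,A_1,\dots,A_{d-1}$ are all injective.
   Context: Set $V_i=\mathbb{C}^{v_i}$ ($i=0,\dots,d-1$), $U=\mathbb{C}^u$. A $(\vec v,u)$-dimensional representation of $\mathcal{F}_{d,n}$ is a tuple of linear maps $e\colon V_0\to U$, $A_p\colon V_p\to V_{p-1}$ ($p=1,\dots,d-1$), and, when $n\geq2$, $f_q\colon U\to V_0$ and $B_{pq}\colon V_{p-1}\to V_p$ ($p=1,\dots,d-1$, $q=1,\dots,n-1$), satisfying for $n\geq2$ and every $q$: if $d=1$, $f_qe=0$; if $d\geq2$, $A_1B_{1q}+f_qe=0$ on $V_0$, $A_{p+1}B_{p+1,q}=B_{pq}A_p$ on $V_p$ for $1\leq p\leq d-2$, and $B_{d-1,q}A_{d-1}=0$ on $V_{d-1}$. (For $n=1$ there are no $f_q,B_{pq}$ and no relations.) Stability: fix a basis $\varepsilon_1,\dots,\varepsilon_u$ of $U$, coordinate maps $\varphi_l\colon U\to\mathbb{C}$ and $\psi_l\colon\mathbb{C}\to U$, $\psi_l(1)=\varepsilon_l$. Associate the representation on $V\oplus\mathbb{C}$ (extra vertex $\infty$ with $V_\infty=\mathbb{C}$) with maps $\tilde e_l=\varphi_l\circ e\colon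 V_0\to\mathbb{C}$, $\tilde f_{ql}=f_q\circ\psi_l\colon\mathbb{C}\to V_0$, and the $A_p,B_{pq}$. A subrepresentation is a collection of subspaces $S_i\subset V_i$, $S_\infty\subset\mathbb{C}$ preserved by all these maps; put $s_i=\dim S_i$. With $\vartheta^+=(1,\dots,1)\in\mathbb{R}^d$, the representation is $\vartheta^+$-semistable (resp. stable) if every proper nontrivial subrepresentation satisfies $\sum_i s_i\leq(\sum_i v_i)s_\infty$ (resp. strict inequality). *)

(* Linear maps are matrices acting on ROW vectors:
   a map X -> Y with dim X = a, dim Y = b is a matrix M : 'M_(a,b),
   x |-> x *m M.  Composition "g f" (first f, then g) is  F *m G.
   Subspaces are row spaces of square matrices (mxalgebra, %MS). *)
From HB Require Import structures.
From mathcomp Require Import all_boot all_algebra.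
From mathcomp Require Import complex reals.
Set Implicit Arguments. Unset Strict Implicit. Unset Printing Implicit Defensive.
Import GRing.Theory.
Local Open Scope ring_scope.

Section Quiver.
Variable K : fieldType.
Variables (d n u : nat) (v : nat -> nat).
(* V_i = K^(v i), i = 0..d-1 ;  U = K^u *)

(* A tuple of linear maps; only indices 1 <= p <= d-1, 1 <= q <= n-1 matter. *)
Record rep := Rep {
  rep_e : 'M[K]_(v 0, u);
  rep_A : forall p : nat, 'M[K]_(v p, v p.-1);
  rep_f : nat -> 'M[K]_(u, v 0);
  rep_B : forall p q : nat, 'M[K]_(v p.-1, v p)
}.

Definition rep_relations (r : rep) : Prop :=
  (2 <= n)%N ->
  forall q : nat, (1 <= q <= n.-1)%N ->
    if d == 1%N then rep_e r *m rep_f r q = 0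
    else
      [/\ rep_B r 1 q *m rep_A r 1 + rep_e r *m rep_f r q = 0,
          (forall p : nat, (1 <= p <= d - 2)%N ->
             rep_B r p.+1 q *m rep_A r p.+1 = rep_A r p *m rep_B r p q)
        & rep_A r d.-1 *m rep_B r d.-1 q = 0].

(* coordinate maps: e~_l = phi_l o e : V_0 -> C ; f~_ql = f_q o psi_l : C -> V_0 *)
Definition etil (r : rep) (l : 'I_u) : 'M[K]_(v 0, 1) := rep_e r *m delta_mx l 0.
Definition ftil (r : rep) (q : nat) (l : 'I_u) : 'M[K]_(1, v 0) :=
  delta_mx 0 l *m rep_f r q.

(* A subrepresentation of the framed representation on V (+) C:
   subspaces S i of V_i (row space of S i) and Sinf of C, preserved by all maps. *)
Definition is_subrep (r : rep) (S : forall i : nat, 'M[K]_(v i)) (Sinf : 'M[K]_1) : Prop :=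
  [/\ forall l : 'I_u, (S 0%N *m etil r l <= Sinf)%MS,
      forall q : nat, (1 <= q <= n.-1)%N -> forall l : 'I_u, (Sinf *m ftil r q l <= S 0%N)%MS,
      forall p : nat, (1 <= p <= d.-1)%N -> (S p *m rep_A r p <= S p.-1)%MS
    & forall p q : nat, (1 <= p <= d.-1)%N -> (1 <= q <= n.-1)%N ->
        (S p.-1 *m rep_B r p q <= S p)%MS].

Definition subrep_trivial (S : forall i : nat, 'M[K]_(v i)) (Sinf : 'M[K]_1) : Prop :=
  (forall i : nat, (i < d)%N -> \rank (S i) = 0%N) /\ \rank Sinf = 0%N.

Definition subrep_full (S : forall i : nat, 'M[K]_(v i)) (Sinf : 'M[K]_1) : Prop :=
  (forall i : nat, (i < d)%N -> \rank (S i) = v i) /\ \rank Sinf = 1%N.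

(* theta^+ = (1,...,1) *)
Definition theta_semistable (r : rep) : Prop :=
  forall (S : forall i : nat, 'M[K]_(v i)) (Sinf : 'M[K]_1),
    is_subrep r S Sinf -> ~ subrep_trivial S Sinf -> ~ subrep_full S Sinf ->
    (\sum_(i < d) \rank (S i) <= (\sum_(i < d) v i) * \rank Sinf)%N.

Definition theta_stable (r : rep) : Prop :=
  forall (S : forall i : nat, 'M[K]_(v i)) (Sinf : 'M[K]_1),
    is_subrep r S Sinf -> ~ subrep_trivial S Sinf -> ~ subrep_full S Sinf ->
    (\sum_(i < d) \rank (S i) < (\sum_(i < d) v i) * \rank Sinf)%N.

End Quiver.

From HB Require Import structures.
From mathcomp Require Import all_boot all_algebra.
From mathcomp Require Import complex reals.
From mathcomp Require Import zify.
Import GRing.Theory.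
Local Open Scope ring_scope.

(* A subrepresentation with S_oo = C satisfies the theta^+ inequality trivially,
   strictly unless it is everything; so both stability notions say exactly that
   no nonzero subrepresentation has S_oo = 0.  The kernels of the composites
   V_p -> V_{p-1} -> ... -> V_0 -> U form such a subrepresentation, because the
   relations give e A_1 ... A_{p+1} B_{p+1,q} = - e f_q e A_1 ... A_p; conversely,
   if e and all A_p are injective, a subrepresentation with S_oo = 0 vanishes at
   V_0 and then, one vertex at a time, everywhere. *)

Lemma row_freeMl (F : fieldType) m k p (A : 'M[F]_(m, k)) (B : 'M[F]_(k, p)) :
  row_free (A *m B) -> row_free A.
Proof. by rewrite -!row_leq_rank => /leq_trans; apply; apply: mxrankM_maxl. Qed.

Lemma col_eq0 (F : fieldType) m k (M : 'M[F]_(m, k)) :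
  (forall j, col j M = 0) -> M = 0.
Proof.
move=> Mcol0; apply/matrixP => i j.
by have /matrixP/(_ i 0) := Mcol0 j; rewrite !mxE.
Qed.

Lemma ltn_sum_ord m (F G : 'I_m -> nat) (i : 'I_m) :
  (forall j, F j <= G j)%N -> (F i < G i)%N -> (\sum_j F j < \sum_j G j)%N.
Proof.
move=> leFG ltFGi; rewrite (bigD1 i) //= [X in (_ < X)%N](bigD1 i) //=.
by rewrite -addSn leq_add // leq_sum.
Qed.

Section Framing.
Variable K : fieldType.
Variables (d n u : nat) (v : nat -> nat) (r : rep K u v).

Fixpoint rep_chain (p : nat) : 'M[K]_(v p, u) :=
  if p is p'.+1 then rep_A r p'.+1 *m rep_chain p' else rep_e r.

Definition no_unframed_subrep : Prop :=
  forall S, is_subrep d n r S 0 -> forall i, (i < d)%N -> S i = 0.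

Section Relations.
Hypothesis hrel : rep_relations d n r.

Lemma mulB_rep_chain q k : (1 <= q <= n.-1)%N -> (k < d.-1)%N ->
  rep_B r k.+1 q *m rep_chain k.+1 = - (rep_chain k *m (rep_f r q *m rep_e r)).
Proof.
move=> hq; have /hrel /(_ q hq) rels : (2 <= n)%N by lia.
elim: k => [|k IHk] hk.
  have /negPf d1 : d != 1%N by apply/eqP; lia.
  rewrite d1 in rels; case: rels => /eqP; rewrite addr_eq0 => /eqP BA _ _.
  by rewrite /= mulmxA BA mulNmx mulmxA.
have /negPf d1 : d != 1%N by apply/eqP; lia.
rewrite d1 in rels; case: rels => _ BA_AB _.
rewrite [rep_chain k.+2]/= mulmxA BA_AB; last by lia.
rewrite -mulmxA IHk; last by lia.
by rewrite mulmxN (mulmxA (rep_A r k.+1)).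
Qed.

Lemma kermx_rep_chain_subrep :
  is_subrep d n r (fun p => kermx (rep_chain p)) 0.
Proof.
split.
- by move=> l; rewrite /etil mulmxA mulmx_ker mul0mx sub0mx.
- by move=> q _ l; rewrite mul0mx sub0mx.
- case=> [|p] hp //=; apply/sub_kermxP.
  by rewrite -mulmxA mulmx_ker.
- case=> [|p] q hp hq //=; apply/sub_kermxP.
  by rewrite -mulmxA mulB_rep_chain ?mulmxN ?mulmxA ?mulmx_ker ?mul0mx ?oppr0 //; lia.
Qed.

Lemma no_unframed_subrep_row_free_chain :
  no_unframed_subrep -> forall p, (p < d)%N -> row_free (rep_chain p).
Proof.
move=> noS p hp.
by rewrite -kermx_eq0; apply/eqP; apply: (noS _ kermx_rep_chain_subrep).
Qed.

End Relations.

Lemma row_free_no_unframed_subrep :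
  row_free (rep_e r) -> (forall p, (1 <= p <= d.-1)%N -> row_free (rep_A r p)) ->
  no_unframed_subrep.
Proof.
move=> free_e free_A S [S0e _ SA _].
have S0 : S 0%N = 0.
  apply: (row_free_inj free_e); rewrite mul0mx; apply: col_eq0 => l.
  by apply/eqP; rewrite colE -mulmxA -submx0 S0e.
elim=> [|p IHp] hp //.
apply: (row_free_inj (free_A p.+1 _)); first by lia.
by apply/eqP; rewrite mul0mx -submx0 -[0](IHp _) ?SA //; lia.
Qed.

Lemma no_unframed_subrepP : (0 < d)%N -> rep_relations d n r ->
  no_unframed_subrep <->
  row_free (rep_e r) /\ (forall p, (1 <= p <= d.-1)%N -> row_free (rep_A r p)).
Proof.
move=> hd hrel; split; last by case; apply: row_free_no_unframed_subrep.
move/(no_unframed_subrep_row_free_chain hrel) => free_chain.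
split=> [|[|p] hp //]; first exact: free_chain.
by apply: (@row_freeMl _ _ _ _ _ (rep_chain p)); apply: free_chain; lia.
Qed.

Lemma theta_semistable_no_unframed_subrep :
  theta_semistable d n r -> no_unframed_subrep.
Proof.
move=> semistab S subS i hi; apply/eqP; apply: contraT => Si_neq0.
have rk_Si : \rank (S i) != 0%N by rewrite mxrank_eq0.
have nontriv : ~ subrep_trivial d S 0 by case=> /(_ i hi) /eqP; rewrite (negPf rk_Si).
have nonfull : ~ subrep_full d S 0 by case=> _; rewrite mxrank0.
have := semistab S 0 subS nontriv nonfull; rewrite mxrank0 muln0 leqn0.
by rewrite (bigD1 (Ordinal hi)) //= addn_eq0 (negPf rk_Si).
Qed.

Lemma no_unframed_subrep_theta_stable :
  no_unframed_subrep -> theta_stable d n r.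
Proof.
move=> noS S Sinf subS nontriv nonfull.
have [/eqP|Sinf_pos] := posnP (\rank Sinf).
  rewrite mxrank_eq0 => /eqP Sinf0; subst Sinf; case: nontriv; split=> [i hi|].
    by rewrite (noS S subS i hi) mxrank0.
  exact: mxrank0.
have Sinf1 : \rank Sinf = 1%N by apply/eqP; rewrite eqn_leq Sinf_pos rank_leq_row.
have [i Si_lt] : exists i : 'I_d, (\rank (S i) < v i)%N.
  apply/existsP; apply: contraT; rewrite negb_exists => /forallP Sfull.
  case: nonfull; split=> // i hi; apply/eqP.
  by rewrite eqn_leq rank_leq_row leqNgt (Sfull (Ordinal hi)).
rewrite Sinf1 muln1.
by apply: (@ltn_sum_ord _ (fun j => \rank (S j)) v i) => // j; apply: rank_leq_row.
Qed.

Lemma theta_stable_semistable : theta_stable d n r -> theta_semistable d n r.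
Proof. by move=> stab S Sinf subS nontriv nonfull; apply/ltnW/stab. Qed.

End Framing.

Theorem lemma7p2 (R : realType) (d n u : nat) (v : nat -> nat)
  (hd : (1 <= d)%N) (hn : (1 <= n)%N) (hud : (d < u)%N)
  (hu0 : (v 0%N < u)%N)
  (hdec : forall i : nat, (i.+1 < d)%N -> (v i.+1 < v i)%N)
  (hlast : (0 < v d.-1)%N)
  (r : rep R[i] u v) (hrel : rep_relations d n r) :
  (theta_semistable d n r <-> theta_stable d n r) /\
  (theta_semistable d n r <->
     row_free (rep_e r) /\ (forall p : nat, (1 <= p <= d.-1)%N -> row_free (rep_A r p))).
Proof.
have ss_no := @theta_semistable_no_unframed_subrep _ d n _ _ r.
have no_st := @no_unframed_subrep_theta_stable _ d n _ _ r.
have st_ss := @theta_stable_semistable _ d n _ _ r.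
have [no_free free_no] := @no_unframed_subrepP _ d n _ _ r hd hrel.
split; split=> H.
- exact: no_st (ss_no H).
- exact: st_ss H.
- exact: no_free (ss_no H).
- exact: st_ss (no_st (free_no H)).
Qed.
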